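(* For any $t,x$, one has $(\mathbb L_y-\mathbb L_z)\dfrac{1}{\sqrt{f_t(x,y,z)}}=0$ (for any local branch of the square root, where $f_t(x,y,z)\neq0$).
   Context: Here $t,x,y,z$ are complex variables, $f_t(x,y,z)=(t+xy-zx-zy)^2-4(z-t)(z-1)xy$, and $\mathbb L_y=\partial_y\,y(y-1)(y-t)\,\partial_y+y$ is the Lamé operator in the variable $y$ (and similarly $\mathbb L_z$ in $z$). *)

From Stdlib Require Import Reals ClassicalEpsilon.
From Coquelicot Require Import Coquelicot.
Open Scope C_scope.

(* Complex derivative of f : C -> C at z (holomorphic derivative, Coquelicot's
   is_derive over the absolute ring C); if f is not complex-differentiable at z
   the value is an arbitrary complex number. *)
Definition Cderiv (f : C -> C) (z : C) : C :=
  epsilon (inhabits (RtoC 0)) (fun l : C => is_derive f z l).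

Definition ft (t x y z : C) : C :=
  (t + x * y - z * x - z * y) * (t + x * y - z * x - z * y)
  - RtoC 4 * (z - t) * (z - RtoC 1) * x * y.

Definition Lame (t : C) (h : C -> C) (w : C) : C :=
  Cderiv (fun u => u * (u - RtoC 1) * (u - t) * Cderiv h u) w + w * h w.

From Stdlib Require Import Reals Lra ClassicalEpsilon.
From Coquelicot Require Import Coquelicot.
Open Scope C_scope.

(* With p(w) = w (w - 1) (w - t) the Lamé operator is L = p D^2 + p' D + w.  If G is
   a branch of the square root of F near a point where F <> 0, then G' = F' / (2 G),
   and differentiating 1/G twice gives
     4 G^5 L(1/G) = 3 p F'^2 - 2 F (p' F' + p F'') + 4 w F^2.
   For F = f_t(x, ., z) in the variable y and F = f_t(x, y, .) in the variable z the
   two right-hand sides are the same polynomial in t, x, y, z, while the left-hand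
   sides share the factor 4 G^5 with G = g(y, z). *)

Lemma RtoC_neq_0 (a : R) : a <> 0%R -> RtoC a <> 0.
Proof. intros Ha H. apply Ha, RtoC_inj, H. Qed.

Lemma Cmod_sub_diag_lt (c : C) (r : posreal) : (Cmod (c - c) < r)%R.
Proof. replace (c - c) with (RtoC 0) by ring. rewrite Cmod_0. apply cond_pos. Qed.

Lemma Cderiv_unique (f : C -> C) (z l : C) : is_derive f z l -> Cderiv f z = l.
Proof.
  intros Hl. unfold Cderiv.
  pose proof (epsilon_spec (inhabits (RtoC 0)) (fun l => is_derive f z l)
                (ex_intro _ l Hl)) as Hchosen.
  apply is_C_derive_unique in Hl. apply is_C_derive_unique in Hchosen. congruence.
Qed.

(* Cderiv uses the normed module C_NormedModule, whereas Coquelicot's product and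
   identity rules are stated for AbsRing_NormedModule C_AbsRing; both structures
   give the same derivatives. *)
Lemma is_derive_C_AbsRing_iff (f : C -> C) (z l : C) :
  @is_derive C_AbsRing C_NormedModule f z l <->
  @is_derive C_AbsRing (AbsRing_NormedModule C_AbsRing) f z l.
Proof.
  split; intros [_ Hlim]; (split; [apply is_linear_scal_l | exact Hlim]).
Qed.

Lemma is_derive_Cconst (a z : C) : is_derive (fun _ => a) z (RtoC 0).
Proof. exact (is_derive_const (K := C_AbsRing) a z). Qed.

Lemma is_derive_Cid (z : C) : is_derive (fun u : C => u) z (RtoC 1).
Proof. apply is_derive_C_AbsRing_iff. exact (is_derive_id (K := C_AbsRing) z). Qed.

Lemma is_derive_Cplus (f g : C -> C) (z df dg : C) :
  is_derive f z df -> is_derive g z dg -> is_derive (fun u => f u + g u) z (df + dg).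
Proof. exact (is_derive_plus (K := C_AbsRing) f g z df dg). Qed.

Lemma is_derive_Cminus (f g : C -> C) (z df dg : C) :
  is_derive f z df -> is_derive g z dg -> is_derive (fun u => f u - g u) z (df - dg).
Proof. exact (is_derive_minus (K := C_AbsRing) f g z df dg). Qed.

Lemma is_derive_Copp (f : C -> C) (z df : C) :
  is_derive f z df -> is_derive (fun u => - f u) z (- df).
Proof. exact (is_derive_opp (K := C_AbsRing) f z df). Qed.

Lemma is_derive_Cmult (f g : C -> C) (z df dg : C) :
  is_derive f z df -> is_derive g z dg ->
  is_derive (fun u => f u * g u) z (df * g z + f z * dg).
Proof.
  intros Hf Hg. apply is_derive_C_AbsRing_iff.
  apply (is_derive_mult (K := C_AbsRing)); [apply is_derive_C_AbsRing_iff .. | exact Cmult_comm];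
    assumption.
Qed.

Lemma Cmod_Cinv_remainder_le (y z : C) : z <> 0 -> (Cmod (y - z) <= Cmod z / 2)%R ->
  (Cmod (/ y - / z + (y - z) / z ^ 2) <= 2 * Cmod (y - z) ^ 2 / Cmod z ^ 3)%R.
Proof.
  intros Hz Hyz.
  assert (Hz_pos : (0 < Cmod z)%R) by (apply Cmod_gt_0; exact Hz).
  assert (Hy_large : (Cmod z / 2 <= Cmod y)%R).
  { pose proof (Cmod_triangle y (- (y - z))) as Htri. rewrite Cmod_opp in Htri.
    replace (y + - (y - z)) with z in Htri by ring. lra. }
  assert (Hy : y <> 0).
  { intros ->. rewrite Cmod_0 in Hy_large. lra. }
  replace (/ y - / z + (y - z) / z ^ 2) with ((y - z) ^ 2 / (y * z ^ 2)) by (field; auto).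
  unfold Cdiv. rewrite Cmod_mult, Cmod_inv, Cmod_mult, !Cmod_pow
    by (apply Cmult_neq_0; auto using Cpow_nz).
  assert (Hinv : (/ (Cmod y * Cmod z ^ 2) <= 2 * / Cmod z ^ 3)%R).
  { replace (2 * / Cmod z ^ 3)%R with (/ (Cmod z / 2 * Cmod z ^ 2))%R by (field; lra).
    apply Rinv_le_contravar.
    - apply Rmult_lt_0_compat; [lra | apply pow_lt; lra].
    - apply Rmult_le_compat_r; [apply pow_le; lra | exact Hy_large]. }
  apply Rle_trans with (Cmod (y - z) ^ 2 * (2 * / Cmod z ^ 3))%R.
  - apply Rmult_le_compat_l; [apply pow_le, Cmod_ge_0 | exact Hinv].
  - right. unfold Rdiv. ring.
Qed.

Lemma is_derive_Cinv_id (z : C) : z <> 0 -> is_derive (fun u => / u) z (- / z ^ 2).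
Proof.
  intros Hz. split; [apply is_linear_scal_l |].
  intros z' Hz'.
  apply (is_filter_lim_locally_unique (K := C_AbsRing)
           (V := AbsRing_NormedModule C_AbsRing)) in Hz'. subst z'.
  intros e.
  apply (locally_le_locally_norm (K := C_AbsRing) (V := AbsRing_NormedModule C_AbsRing)).
  assert (Hz_pos : (0 < Cmod z)%R) by (apply Cmod_gt_0; exact Hz).
  pose proof (cond_pos e) as He.
  assert (Hdelta : (0 < Rmin (Cmod z / 2) (e * Cmod z ^ 3 / 2))%R).
  { apply Rmin_glb_lt; [lra |].
    assert (0 < Cmod z ^ 3)%R by (apply pow_lt; lra). nra. }
  exists (mkposreal _ Hdelta). intros y Hy.
  change (Cmod (y - z) < Rmin (Cmod z / 2) (e * Cmod z ^ 3 / 2))%R in Hy.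
  change (Cmod (/ y - / z - (y - z) * - / z ^ 2) <= e * Cmod (y - z))%R.
  pose proof (Rmin_l (Cmod z / 2) (e * Cmod z ^ 3 / 2)) as Hmin_l.
  pose proof (Rmin_r (Cmod z / 2) (e * Cmod z ^ 3 / 2)) as Hmin_r.
  replace (/ y - / z - (y - z) * - / z ^ 2) with (/ y - / z + (y - z) / z ^ 2) by (unfold Cdiv; ring).
  eapply Rle_trans; [apply Cmod_Cinv_remainder_le; [exact Hz | lra] |].
  assert (Hz3 : (0 < Cmod z ^ 3)%R) by (apply pow_lt; lra).
  pose proof (Cmod_ge_0 (y - z)) as Hyz.
  apply (Rmult_le_reg_r (Cmod z ^ 3)); [exact Hz3 |].
  unfold Rdiv. rewrite Rmult_assoc, Rinv_l by lra.
  nra.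
Qed.

Lemma is_derive_Cinv (f : C -> C) (z df : C) :
  is_derive f z df -> f z <> 0 -> is_derive (fun u => / f u) z (- df / f z ^ 2).
Proof.
  intros Hf Hfz.
  pose proof (is_derive_comp (K := C_AbsRing) (V := C_NormedModule) (fun u => / u) f z _ _
                (is_derive_Cinv_id _ Hfz) (proj1 (is_derive_C_AbsRing_iff f z df) Hf)) as Hcomp.
  replace (- df / f z ^ 2) with (df * - / f z ^ 2) by (unfold Cdiv; ring).
  exact Hcomp.
Qed.

Lemma is_derive_eq (f : C -> C) (z l l' : C) : is_derive f z l -> l = l' -> is_derive f z l'.
Proof. intros Hl <-. exact Hl. Qed.

Ltac auto_Cderive :=
  repeat match goal with
  | |- is_derive (fun _ => ?a) _ _ => apply (is_derive_Cconst a)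
  | |- is_derive (fun u => u) _ _ => apply is_derive_Cid
  | |- is_derive (fun u => @?f u * @?g u) _ _ => eapply (is_derive_Cmult f g)
  | |- is_derive (fun u => @?f u + @?g u) _ _ => eapply (is_derive_Cplus f g)
  | |- is_derive (fun u => @?f u - @?g u) _ _ => eapply (is_derive_Cminus f g)
  | |- is_derive (fun u => - @?f u) _ _ => eapply (is_derive_Copp f)
  | |- is_derive (fun u => / @?f u) _ _ => eapply (is_derive_Cinv f)
  | |- is_derive (fun u => ?f u) _ _ => eassumption
  end.

Notation Clocally := (@locally (AbsRing_UniformSpace C_AbsRing)).

Lemma Clocally_disc (c u : C) (r : R) : (Cmod (u - c) < r)%R ->
  Clocally u (fun w => Cmod (w - c) < r)%R.
Proof.
  intros Hu.
  apply (locally_le_locally_norm (K := C_AbsRing) (V := AbsRing_NormedModule C_AbsRing)).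
  assert (Hgap : (0 < r - Cmod (u - c))%R) by lra.
  exists (mkposreal _ Hgap). intros w Hw.
  change (Cmod (w - u) < r - Cmod (u - c))%R in Hw.
  pose proof (Cmod_triangle (w - u) (u - c)) as Htri.
  replace (w - u + (u - c)) with (w - c) in Htri by ring. lra.
Qed.

Lemma Clocally_neq0 (f : C -> C) (u : C) : ex_derive f u -> f u <> 0 ->
  Clocally u (fun w => f w <> 0).
Proof.
  intros Hf Hfu.
  apply (ex_derive_continuous (K := C_AbsRing) (V := C_NormedModule) f u Hf (fun v : C => v <> 0)).
  apply (locally_le_locally_norm (K := C_AbsRing) (V := C_NormedModule)).
  assert (Hfu_pos : (0 < Cmod (f u))%R) by (apply Cmod_gt_0; exact Hfu).
  exists (mkposreal _ Hfu_pos). intros v Hv Hv0.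
  change (Cmod (v - f u) < Cmod (f u))%R in Hv.
  rewrite Hv0 in Hv. replace (0 - f u) with (- f u) in Hv by ring. rewrite Cmod_opp in Hv. lra.
Qed.

Lemma is_derive_sqrt_branch (F G : C -> C) (u dF : C) :
  Clocally u (fun w => G w * G w = F w) -> ex_derive G u -> is_derive F u dF -> G u <> 0 ->
  is_derive G u (dF / (RtoC 2 * G u)).
Proof.
  intros Hsq HG HF HGu.
  pose proof (C_derive_correct G u 0 HG) as HdG.
  assert (HdF : is_derive F u (C_derive G u * G u + G u * C_derive G u)).
  { eapply is_derive_ext_loc; [exact Hsq |]. apply is_derive_Cmult; exact HdG. }
  apply is_C_derive_unique in HF. apply is_C_derive_unique in HdF.
  replace (dF / (RtoC 2 * G u)) with (C_derive G u); [exact HdG |].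
  rewrite <- HF, HdF. field. exact HGu.
Qed.

Definition lame_poly (t w : C) : C := w * (w - RtoC 1) * (w - t).

Definition lame_poly_deriv (t w : C) : C :=
  (w - RtoC 1) * (w - t) + w * (w - t) + w * (w - RtoC 1).

Definition lame_inv_sqrt_numer (t w F dF d2F : C) : C :=
  RtoC 3 * lame_poly t w * dF ^ 2
  - RtoC 2 * F * (lame_poly_deriv t w * dF + lame_poly t w * d2F)
  + RtoC 4 * w * F ^ 2.

Lemma Lame_inv_sqrt (t c : C) (r : posreal) (F dF G : C -> C) (d2F : C) :
  (forall w, is_derive F w (dF w)) -> is_derive dF c d2F ->
  (forall w, (Cmod (w - c) < r)%R -> G w * G w = F w /\ ex_derive G w) ->
  F c <> 0 ->
  Lame t (fun w => / G w) c = lame_inv_sqrt_numer t c (F c) (dF c) d2F / (RtoC 4 * G c ^ 5).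
Proof.
  intros HF HdF HG HFc.
  pose proof (Cmod_sub_diag_lt c r) as Hc.
  destruct (HG c Hc) as [HGc2 HGc].
  assert (HGc0 : G c <> 0) by (intros HG0; apply HFc; rewrite <- HGc2, HG0; ring).
  assert (Hnear : Clocally c (fun w => (Cmod (w - c) < r)%R /\ G w <> 0)).
  { apply filter_and; [apply Clocally_disc, Hc | apply Clocally_neq0; assumption]. }
  assert (HdG : forall w, (Cmod (w - c) < r)%R -> G w <> 0 ->
            is_derive G w (dF w / (RtoC 2 * G w))).
  { intros w Hw HGw. apply (is_derive_sqrt_branch F G); [| apply HG, Hw | apply HF | exact HGw].
    eapply filter_imp; [| apply (Clocally_disc c w r Hw)]. intros v Hv. apply HG, Hv. }
  assert (HdinvG : Clocally c (fun w => Cderiv (fun v => / G v) w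
                                        = - (dF w / (RtoC 2 * G w)) / G w ^ 2)).
  { eapply filter_imp; [| exact Hnear]. intros w [Hw HGw].
    apply Cderiv_unique, is_derive_Cinv; [apply HdG |]; assumption. }
  unfold Lame.
  erewrite (Cderiv_unique (fun w => w * (w - RtoC 1) * (w - t) * Cderiv (fun v => / G v) w) c).
  2:{ eapply is_derive_ext_loc with
        (f := fun w => w * (w - RtoC 1) * (w - t) * (- (dF w / (RtoC 2 * G w)) / G w ^ 2)).
      { eapply filter_imp; [| exact HdinvG]. intros w Hw. rewrite Hw. reflexivity. }
      unfold Cdiv. cbn [Cpow]. auto_Cderive; try (apply HdG; assumption).
      all: repeat apply Cmult_neq_0; auto; apply RtoC_neq_0; lra. }
  unfold lame_inv_sqrt_numer, lame_poly, lame_poly_deriv.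
  rewrite <- HGc2. field. exact HGc0.
Qed.

Definition ft_dy (t x y z : C) : C :=
  RtoC 2 * (t + x * y - z * x - z * y) * (x - z) - RtoC 4 * (z - t) * (z - RtoC 1) * x.

Definition ft_dyy (x z : C) : C := RtoC 2 * (x - z) ^ 2.

Definition ft_dz (t x y z : C) : C :=
  - RtoC 2 * (t + x * y - z * x - z * y) * (x + y)
  - RtoC 4 * ((z - RtoC 1) + (z - t)) * x * y.

Definition ft_dzz (x y : C) : C := RtoC 2 * (x + y) ^ 2 - RtoC 8 * x * y.

Lemma is_derive_ft_y (t x y z : C) : is_derive (fun w => ft t x w z) y (ft_dy t x y z).
Proof. eapply is_derive_eq; [unfold ft; auto_Cderive | unfold ft_dy; ring]. Qed.

Lemma is_derive_ft_dy_y (t x y z : C) : is_derive (fun w => ft_dy t x w z) y (ft_dyy x z).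
Proof. eapply is_derive_eq; [unfold ft_dy; auto_Cderive | unfold ft_dyy; ring]. Qed.

Lemma is_derive_ft_z (t x y z : C) : is_derive (fun w => ft t x y w) z (ft_dz t x y z).
Proof. eapply is_derive_eq; [unfold ft; auto_Cderive | unfold ft_dz; ring]. Qed.

Lemma is_derive_ft_dz_z (t x y z : C) : is_derive (fun w => ft_dz t x y w) z (ft_dzz x y).
Proof. eapply is_derive_eq; [unfold ft_dz; auto_Cderive | unfold ft_dzz; ring]. Qed.

Lemma lame_inv_sqrt_numer_ft_sym (t x y z : C) :
  lame_inv_sqrt_numer t y (ft t x y z) (ft_dy t x y z) (ft_dyy x z)
  = lame_inv_sqrt_numer t z (ft t x y z) (ft_dz t x y z) (ft_dzz x y).
Proof.
  unfold lame_inv_sqrt_numer, lame_poly, lame_poly_deriv, ft, ft_dy, ft_dyy, ft_dz, ft_dzz.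
  ring.
Qed.

Theorem proposition5p14 (t x y0 z0 : C) (g : C -> C -> C) (eps : posreal) :
  ft t x y0 z0 <> RtoC 0 ->
  (forall y z : C, Cmod (y - y0) < eps -> Cmod (z - z0) < eps ->
     g y z * g y z = ft t x y z /\
     ex_derive (fun w : C => g w z) y /\
     ex_derive (fun w : C => g y w) z) ->
  Lame t (fun y : C => / g y z0) y0 - Lame t (fun z : C => / g y0 z) z0 = RtoC 0.
Proof.
  intros Hft Hg.
  pose proof (Cmod_sub_diag_lt y0 eps) as Hy0.
  pose proof (Cmod_sub_diag_lt z0 eps) as Hz0.
  assert (Hg_y : forall w, (Cmod (w - y0) < eps)%R ->
            g w z0 * g w z0 = ft t x w z0 /\ ex_derive (fun v => g v z0) w).
  { intros w Hw. destruct (Hg w z0 Hw Hz0) as [Hsq [Hder _]]. split; assumption. }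
  assert (Hg_z : forall w, (Cmod (w - z0) < eps)%R ->
            g y0 w * g y0 w = ft t x y0 w /\ ex_derive (fun v => g y0 v) w).
  { intros w Hw. destruct (Hg y0 w Hy0 Hw) as [Hsq [_ Hder]]. split; assumption. }
  rewrite (Lame_inv_sqrt t y0 eps (fun w => ft t x w z0) (fun w => ft_dy t x w z0)
             (fun w => g w z0) (ft_dyy x z0) (fun w => is_derive_ft_y t x w z0)
             (is_derive_ft_dy_y t x y0 z0) Hg_y Hft).
  rewrite (Lame_inv_sqrt t z0 eps (fun w => ft t x y0 w) (fun w => ft_dz t x y0 w)
             (fun w => g y0 w) (ft_dzz x y0) (fun w => is_derive_ft_z t x y0 w)
             (is_derive_ft_dz_z t x y0 z0) Hg_z Hft).
  rewrite lame_inv_sqrt_numer_ft_sym. ring.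
Qed.
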